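(* For every $n\in\mathbb{N}$, $g\big[\mathbf{RP}_n(\mathbb{R})\big] > \frac{1}{641}\,n^{1.669}$.
   Context: For an $n\times n$ complex matrix $A=(a_{i,j})$, Gaussian elimination without pivoting is the recursion $a^{(1)}_{i,j}=a_{i,j}$ and $a^{(k+1)}_{i,j}=a^{(k)}_{i,j}-a^{(k)}_{i,k}a^{(k)}_{k,j}/a^{(k)}_{k,k}$ for $k+1\le i,j\le n$, $k=1,\dots,n-1$ (defined when all pivots $a^{(k)}_{k,k}\neq0$). The growth factor is $g(A)=\max_{i,j,k}|a^{(k)}_{i,j}|/\max_{i,j}|a_{i,j}|$. For $S\subseteq\mathbb{C}$, $\mathbf{RP}_n(S)$ (rook pivoted matrices) is the set of invertible $A\in S^{n\times n}$ for which elimination without pivoting is defined and $|a^{(k)}_{i,k}|\le|a^{(k)}_{k,k}|$ and $|a^{(k)}_{k,j}|\le|a^{(k)}_{k,k}|$ for all $k$ and all $i,j\ge k$. For a set $\mathbf{X}$ of matrices, $g[\mathbf{X}]=\sup_{A\in\mathbf{X}}g(A)$. *)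

From HB Require Import structures.
From mathcomp Require Import all_boot all_order all_algebra.
From mathcomp Require Import all_classical all_reals all_analysis.
Set Implicit Arguments. Unset Strict Implicit. Unset Printing Implicit Defensive.
Import Order.TTheory GRing.Theory Num.Theory.
Local Open Scope ring_scope.

Section GE.
Variable R : realType.
Variable n : nat.

Definition ge_step (A : 'M[R]_n) (k : nat) : 'M[R]_n :=
  if @insub nat (fun m => (m < n)%N) 'I_n k is Some p then
  \matrix_(i, j)
    if (p < i)%N && (p < j)%N then
      A i j - A i p * A p j / A p p
    else A i j
  else A.

(* ge_iter A k = a^(k+1) in the paper's 1-based notation. *)
Fixpoint ge_iter (A : 'M[R]_n) (k : nat) : 'M[R]_n :=
  match k with
  | 0 => A
  | k'.+1 => ge_step (ge_iter A k') k'
  end.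

Definition ge_defined (A : 'M[R]_n) : Prop :=
  forall k : 'I_n, ge_iter A k k k != 0.

Definition max_entry (A : 'M[R]_n) : R :=
  \big[Num.max/0]_(i < n) \big[Num.max/0]_(j < n) `|A i j|.

Definition max_all_stages (A : 'M[R]_n) : R :=
  \big[Num.max/0]_(k < n) \big[Num.max/0]_(i < n | (k <= i)%N)
     \big[Num.max/0]_(j < n | (k <= j)%N) `|ge_iter A k i j|.

Definition growth_factor (A : 'M[R]_n) : R := max_all_stages A / max_entry A.

Definition rook_pivoted (A : 'M[R]_n) : Prop :=
  A \in unitmx /\ ge_defined A /\
  forall k : 'I_n,
    (forall i : 'I_n, (k <= i)%N -> `|ge_iter A k i k| <= `|ge_iter A k k k|) /\
    (forall j : 'I_n, (k <= j)%N -> `|ge_iter A k k j| <= `|ge_iter A k k k|).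

(* g[RP_n(R)] as an extended real supremum (could a priori be +oo). *)
Definition growth_RP : \bar R :=
  ereal_sup [set (growth_factor A)%:E | A in [set A | rook_pivoted A]].

End GE.

(* If A = L U with L unit lower triangular, U upper triangular
   with nonzero diagonal, then the k-th stage of elimination on A is the
   Schur complement (sum_{l >= k} L_il U_lj)_{i,j >= k}; in particular its
   pivots are U_kk, its pivot column is L_ik U_kk and its pivot row is U_kj.
   Hence A is rook pivoted as soon as |L_ij| <= 1 and each row of U is
   dominated by its diagonal entry, and if moreover |A_ij| <= 1 then
   g(A) >= |U_kk| for every k.  We package these conditions, together with a
   lower bound g on the last pivot, as a "growth certificate" of size N.

   Certificates are closed under Kronecker products (sizes and bounds
   multiply) and under padding with a leading 1 x 1 identity block.  An
   explicit 40 x 40 certificate with last pivot > 473, given by integer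
   tables and checked by computation, therefore yields certificates of every
   size n with 40^k <= n < 40^(k+1) and bound 473^k.  Finally
   40^1.669 <= 473 (checked as 40^1669 <= 473^1000) and 641 > 473 give
   n^1.669 / 641 < 473^(k+1) / 641 < 473^k. *)
From Stdlib Require Import ZArith.
From mathcomp Require Import all_boot all_order all_algebra.
From mathcomp Require Import all_classical all_reals all_analysis.
From mathcomp Require Import zify ssrZ.
Import Order.TTheory GRing.Theory Num.Theory.
Set Implicit Arguments. Unset Strict Implicit. Unset Printing Implicit Defensive.
Local Open Scope ring_scope.

Section LUFactorization.
Variable R : realType.

(* Matrices are given by their entries as functions on nat x nat, which
   makes Kronecker products and block padding easy to describe. *)
Definition lu_entry (n : nat) (L U : nat -> nat -> R) (i j : nat) : R :=
  \sum_(l < n) L i l * U l j.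

Definition lu_matrix (n : nat) (L U : nat -> nat -> R) : 'M[R]_n :=
  \matrix_(i, j) lu_entry n L U i j.

(* Entries of the trailing product sum_{l >= k} L_il U_lj; by the Schur
   complement formula this is the k-th elimination stage of L U. *)
Definition lu_tail (n : nat) (L U : nat -> nat -> R) (k i j : nat) : R :=
  \sum_(l < n | (k <= l)%N) L i l * U l j.

Lemma lu_tail_split n L U k i j : (k < n)%N ->
  lu_tail n L U k i j = L i k * U k j + lu_tail n L U k.+1 i j.
Proof.
move=> kn; rewrite /lu_tail (bigD1 (Ordinal kn)) //=; congr (_ + _).
by apply: eq_bigl => l; rewrite ltn_neqAle andbC eq_sym.
Qed.

Section Elimination.
Variables (n : nat) (L U : nat -> nat -> R).
Hypothesis L_upper0 : forall i j, (i < n)%N -> (j < n)%N -> (i < j)%N -> L i j = 0.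
Hypothesis L_diag1 : forall i, (i < n)%N -> L i i = 1.
Hypothesis U_lower0 : forall i j, (i < n)%N -> (j < n)%N -> (j < i)%N -> U i j = 0.
Hypothesis U_diag_neq0 : forall i, (i < n)%N -> U i i != 0.

Let A := lu_matrix n L U.

(* The k-th elimination stage of L U is the product of the trailing parts
   of L and U: eliminating the pivot k removes exactly the term l = k. *)
Lemma ge_iter_lu k (i j : 'I_n) : (k <= i)%N -> (k <= j)%N ->
  ge_iter A k i j = lu_tail n L U k i j.
Proof.
elim: k i j => [|k IH] i j ki kj; first by rewrite /= mxE; apply: eq_bigl.
have kn : (k < n)%N := ltn_trans ki (ltn_ord i).
rewrite /= /ge_step (insubT (fun m => (m < n)%N) kn) mxE /= ki kj /=.
rewrite !IH ?(ltnW ki) ?(ltnW kj) // -[nat_of_ord (Sub k kn : 'I_n)]/k.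
have tail_col m : lu_tail n L U k.+1 m k = 0.
  by apply: big1 => l kl; rewrite U_lower0 ?mulr0.
have tail_row m : lu_tail n L U k.+1 k m = 0.
  by apply: big1 => l kl; rewrite L_upper0 ?mul0r.
rewrite !(lu_tail_split _ _ _ _ kn) tail_col !tail_row !addr0.
by rewrite L_diag1 // !mul1r mulrAC mulfK ?U_diag_neq0 // addrC addKr.
Qed.

(* In stage k the pivot column and the pivot row only retain the term l = k. *)
Lemma ge_iter_lu_col (k i : 'I_n) : (k <= i)%N -> ge_iter A k i k = L i k * U k k.
Proof.
move=> ki; rewrite ge_iter_lu // lu_tail_split // /lu_tail big1 ?addr0 // => l kl.
by rewrite U_lower0 ?mulr0.
Qed.

Lemma ge_iter_lu_row (k j : 'I_n) : (k <= j)%N -> ge_iter A k k j = U k j.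
Proof.
move=> kj; rewrite ge_iter_lu // lu_tail_split // /lu_tail big1 ?addr0 ?L_diag1 ?mul1r //.
by move=> l kl; rewrite L_upper0 ?mul0r.
Qed.

Lemma ge_iter_lu_pivot (k : 'I_n) : ge_iter A k k k = U k k.
Proof. exact: ge_iter_lu_row. Qed.

Lemma lu_matrix_unit : A \in unitmx.
Proof.
have -> : A = (\matrix_(i < n, j < n) L i j) *m (\matrix_(i < n, j < n) U i j).
  by apply/matrixP => i j; rewrite !mxE; apply: eq_bigr => l _; rewrite !mxE.
rewrite unitmxE det_mulmx -[X in _ * \det X]trmxK det_tr !det_trig.
- rewrite unitfE mulf_neq0 //; apply/prodf_neq0 => i _; rewrite !mxE.
    by rewrite L_diag1 // oner_neq0.
  exact: U_diag_neq0.
- by apply/is_trig_mxP => i j ij; rewrite !mxE U_lower0.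
- by apply/is_trig_mxP => i j ij; rewrite !mxE L_upper0.
Qed.

Hypothesis L_bounded : forall i j, (i < n)%N -> (j < n)%N -> `|L i j| <= 1.
Hypothesis U_row_dominated :
  forall i j, (i < n)%N -> (j < n)%N -> `|U i j| <= `|U i i|.

(* Bounded multipliers and diagonally dominated rows of U make every pivot
   maximal in its row and column: L U is rook pivoted. *)
Lemma lu_matrix_rook_pivoted : rook_pivoted A.
Proof.
split; first exact: lu_matrix_unit.
split; first by move=> k; rewrite ge_iter_lu_pivot U_diag_neq0.
move=> k; split => [i ki|j kj]; rewrite ge_iter_lu_pivot.
  by rewrite ge_iter_lu_col // normrM ler_piMl // L_bounded.
by rewrite ge_iter_lu_row // U_row_dominated.
Qed.

Hypothesis A_bounded :
  forall i j, (i < n)%N -> (j < n)%N -> `|lu_entry n L U i j| <= 1.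

Lemma lu_matrix_growth (k : 'I_n) : `|U k k| <= growth_factor A.
Proof.
have n0 : (0 < n)%N by apply: leq_ltn_trans (ltn_ord k).
pose i0 : 'I_n := Ordinal n0.
have max_le1 : max_entry A <= 1.
  by apply: bigmax_le => // i _; apply: bigmax_le => // j _; rewrite mxE A_bounded.
have max_gt0 : 0 < max_entry A.
  apply: (@lt_le_trans _ _ `|A i0 i0|).
    by rewrite (ge_iter_lu_pivot i0) normr_gt0 U_diag_neq0.
  by apply: (bigmax_sup i0) => //; apply: (bigmax_sup i0).
have pivot_le : `|U k k| <= max_all_stages A.
  apply: (bigmax_sup k) => //; apply: (bigmax_sup k) => //.
  by apply: (bigmax_sup k) => //; rewrite ge_iter_lu_pivot.
rewrite /growth_factor ler_pdivlMr //; apply: le_trans pivot_le.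
by rewrite ler_piMr.
Qed.

End Elimination.

(* The last pivot is tracked because it is
   multiplicative under Kronecker products. *)
Record growth_certificate (N : nat) (L U : nat -> nat -> R) (g : R) : Prop := {
  cert_size_gt0 : (0 < N)%N;
  cert_bound_ge0 : 0 <= g;
  cert_bound_le_pivot : g <= `|U N.-1 N.-1|;
  cert_L_upper0 : forall i j, (i < N)%N -> (j < N)%N -> (i < j)%N -> L i j = 0;
  cert_L_diag1 : forall i, (i < N)%N -> L i i = 1;
  cert_U_lower0 : forall i j, (i < N)%N -> (j < N)%N -> (j < i)%N -> U i j = 0;
  cert_U_diag_neq0 : forall i, (i < N)%N -> U i i != 0;
  cert_L_bounded : forall i j, (i < N)%N -> (j < N)%N -> `|L i j| <= 1;
  cert_U_row_dominated :
    forall i j, (i < N)%N -> (j < N)%N -> `|U i j| <= `|U i i|;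
  cert_A_bounded :
    forall i j, (i < N)%N -> (j < N)%N -> `|lu_entry N L U i j| <= 1 }.

Lemma certificate_growth N L U g : growth_certificate N L U g ->
  rook_pivoted (lu_matrix N L U) /\ g <= growth_factor (lu_matrix N L U).
Proof.
case=> N0 _ g_le Lup Ld Ulow Ud Lb Udom Ab; split.
  exact: lu_matrix_rook_pivoted Lup Ld Ulow Ud Lb Udom.
have lastN : (N.-1 < N)%N by rewrite ltn_predL.
exact: le_trans g_le (lu_matrix_growth Lup Ld Ulow Ud Ab (Ordinal lastN)).
Qed.

Definition kron (p : nat) (F G : nat -> nat -> R) (i j : nat) : R :=
  F (i %/ p)%N (j %/ p)%N * G (i %% p)%N (j %% p)%N.

Lemma big_ord_mul_divmod m p (f g : nat -> R) : (0 < p)%N ->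
  \sum_(l < m * p) f (l %/ p)%N * g (l %% p)%N =
  (\sum_(a < m) f a) * (\sum_(b < p) g b).
Proof.
move=> p0; elim: m => [|m IH]; first by rewrite mul0n !big_ord0 mul0r.
rewrite mulSnr big_split_ord /= IH big_ord_recr /= mulrDl; congr (_ + _).
rewrite big_distrr /=; apply: eq_bigr => b _.
by rewrite divnMDl // divn_small // addn0 modnMDl modn_small.
Qed.

Lemma lu_entry_kron m p L1 U1 L2 U2 i j : (0 < p)%N ->
  lu_entry (m * p) (kron p L1 L2) (kron p U1 U2) i j =
  lu_entry m L1 U1 (i %/ p) (j %/ p) * lu_entry p L2 U2 (i %% p) (j %% p).
Proof.
move=> p0; rewrite /lu_entry /kron.
under eq_bigr => l _ do rewrite mulrACA.
exact: (big_ord_mul_divmod _ (fun a => L1 _ a * U1 a _) (fun b => L2 _ b * U2 b _)).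
Qed.

Lemma ltn_divmod p i j : (i < j)%N ->
  (i %/ p < j %/ p)%N \/ ((i %/ p)%N = (j %/ p)%N /\ (i %% p < j %% p)%N).
Proof.
move=> ij; have := divn_eq i p; have := divn_eq j p.
have := leq_div2r p (ltnW ij).
case: (ltngtP (i %/ p)%N (j %/ p)%N) => [h|h|h]; first by left.
  by move=> /=; lia.
by right; split => //; lia.
Qed.

(* Kronecker products of certificates are certificates: triangularity,
   the bounds on L and on L U, and row dominance of U are all preserved by
   products of entries, and the last pivot of the product is the product of
   the last pivots. *)
Lemma certificate_kron m p L1 U1 g1 L2 U2 g2 :
  growth_certificate m L1 U1 g1 -> growth_certificate p L2 U2 g2 ->
  growth_certificate (m * p) (kron p L1 L2) (kron p U1 U2) (g1 * g2).
Proof.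
case=> m0 g10 g1_le L1up L1d U1low U1d L1b U1dom A1b.
case=> p0 g20 g2_le L2up L2d U2low U2d L2b U2dom A2b.
have div_lt i : (i < m * p)%N -> (i %/ p < m)%N by rewrite ltn_divLR.
have mod_lt i : (i %% p < p)%N by rewrite ltn_pmod.
split.
- by rewrite muln_gt0 m0.
- exact: mulr_ge0.
- have -> : (m * p).-1 = m.-1 * p + p.-1 by nia.
  rewrite /kron divnMDl // divn_small ?addn0 ?modnMDl ?modn_small ?ltn_predL //.
  by rewrite normrM ler_pM.
- move=> i j im jm /(ltn_divmod p) [lt_div | [eq_div lt_mod]]; rewrite /kron.
    by rewrite L1up ?mul0r ?div_lt.
  by rewrite L2up ?mulr0.
- by move=> i im; rewrite /kron L1d ?L2d ?mulr1 ?div_lt.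
- move=> i j im jm /(ltn_divmod p) [lt_div | [eq_div lt_mod]]; rewrite /kron.
    by rewrite U1low ?mul0r ?div_lt.
  by rewrite U2low ?mulr0.
- by move=> i im; rewrite /kron mulf_neq0 ?U1d ?U2d ?div_lt.
- move=> i j im jm; rewrite /kron normrM mulr_ile1 ?normr_ge0 //.
    by rewrite L1b ?div_lt.
  by rewrite L2b.
- move=> i j im jm; rewrite /kron !normrM ler_pM ?normr_ge0 //.
    by rewrite U1dom ?div_lt.
  by rewrite U2dom.
- move=> i j im jm; rewrite lu_entry_kron // normrM mulr_ile1 ?normr_ge0 //.
    by rewrite A1b ?div_lt.
  by rewrite A2b.
Qed.

Definition pad1 (F : nat -> nat -> R) (i j : nat) : R :=
  match i, j with
  | 0, 0 => 1
  | 0, _ | _, 0 => 0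
  | i'.+1, j'.+1 => F i' j'
  end.

Lemma lu_entry_pad1 N L U i j :
  lu_entry N.+1 (pad1 L) (pad1 U) i.+1 j.+1 = lu_entry N L U i j.
Proof. by rewrite /lu_entry big_ord_recl /= mul0r add0r. Qed.

Lemma lu_entry_pad1_border N L U i j : (i == 0)%N || (j == 0)%N ->
  lu_entry N.+1 (pad1 L) (pad1 U) i j = ((i == 0) && (j == 0))%:R.
Proof.
rewrite /lu_entry big_ord_recl /=.
case: i j => [|i] [|j] //= _; rewrite ?mulr1 ?mulr0 ?mul0r ?add0r big1 ?addr0 //.
all: by move=> l _; rewrite /= ?mulr0 ?mul0r.
Qed.

Lemma certificate_pad1 N L U g :
  growth_certificate N L U g -> growth_certificate N.+1 (pad1 L) (pad1 U) g.
Proof.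
case=> N0 g0 g_le Lup Ld Ulow Ud Lb Udom Ab; split => //.
- by move: N0 g_le; case: (N).
- by move=> [|i] [|j] //= im jm ij; apply: Lup.
- by move=> [|i] //= im; apply: Ld.
- by move=> [|i] [|j] //= im jm ij; apply: Ulow.
- by move=> [|i] im /=; [exact: oner_neq0 | exact: Ud].
- by move=> [|i] [|j] //= im jm; rewrite ?normr1 ?normr0 ?ler01 // Lb.
- by move=> [|i] [|j] //= im jm; rewrite ?normr1 ?normr0 ?normr_ge0 // Udom.
- move=> [|i] [|j] im jm; last by rewrite lu_entry_pad1 Ab.
  all: by rewrite lu_entry_pad1_border //= ?normr1 ?normr0 ?ler01.
Qed.

Lemma certificate_pad r N L U g : growth_certificate N L U g ->
  growth_certificate (r + N) (iter r pad1 L) (iter r pad1 U) g.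
Proof. by move=> cert; elim: r => [|r IH] //=; exact: certificate_pad1. Qed.

Definition one_entry (i j : nat) : R := 1.

Lemma certificate_one : growth_certificate 1 one_entry one_entry 1.
Proof.
split => //; try by move=> [|i] [|j].
- by rewrite /one_entry normr1.
- by move=> [|i] //; rewrite /one_entry oner_neq0.
- by move=> [|i] [|j] // _ _; rewrite /one_entry normr1.
- by move=> [|i] [|j] // _ _; rewrite /lu_entry big_ord1 /one_entry mulr1 normr1.
Qed.

Fixpoint kron_pow (m : nat) (F : nat -> nat -> R) (k : nat) : nat -> nat -> R :=
  if k is k'.+1 then kron (m ^ k') F (kron_pow m F k') else one_entry.

Lemma certificate_pow m L U g k : growth_certificate m L U g ->
  growth_certificate (m ^ k) (kron_pow m L k) (kron_pow m U k) (g ^+ k).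
Proof.
move=> cert; elim: k => [|k IH] /=; first exact: certificate_one.
by rewrite expnS exprS; apply: certificate_kron.
Qed.

End LUFactorization.

(* An explicit 40 x 40 certificate, stored as integer tables: L = a / 10^6
   and U = b / 10^6.  Its last pivot is 504.98... > 473. *)
Module Certificate40.
Local Open Scope Z_scope.

Definition a_table : seq (seq Z) :=
[::
  [:: 1000000; 0; 0; 0; 0; 0; 0; 0; 0; 0; 0; 0; 0; 0; 0; 0; 0; 0; 0; 0; 0; 0; 0; 0; 0; 0; 0; 0; 0; 0; 0; 0; 0; 0; 0; 0; 0; 0; 0; 0];
  [:: 4198; 1000000; 0; 0; 0; 0; 0; 0; 0; 0; 0; 0; 0; 0; 0; 0; 0; 0; 0; 0; 0; 0; 0; 0; 0; 0; 0; 0; 0; 0; 0; 0; 0; 0; 0; 0; 0; 0; 0; 0];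
  [:: -2779; 752; 1000000; 0; 0; 0; 0; 0; 0; 0; 0; 0; 0; 0; 0; 0; 0; 0; 0; 0; 0; 0; 0; 0; 0; 0; 0; 0; 0; 0; 0; 0; 0; 0; 0; 0; 0; 0; 0; 0];
  [:: -262; 953; 932; 1000000; 0; 0; 0; 0; 0; 0; 0; 0; 0; 0; 0; 0; 0; 0; 0; 0; 0; 0; 0; 0; 0; 0; 0; 0; 0; 0; 0; 0; 0; 0; 0; 0; 0; 0; 0; 0];
  [:: -1023; -1101; 248; -3; 1000000; 0; 0; 0; 0; 0; 0; 0; 0; 0; 0; 0; 0; 0; 0; 0; 0; 0; 0; 0; 0; 0; 0; 0; 0; 0; 0; 0; 0; 0; 0; 0; 0; 0; 0; 0];
  [:: 5341; -587; 1848; 1876; 1624; 1000000; 0; 0; 0; 0; 0; 0; 0; 0; 0; 0; 0; 0; 0; 0; 0; 0; 0; 0; 0; 0; 0; 0; 0; 0; 0; 0; 0; 0; 0; 0; 0; 0; 0; 0];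
  [:: 14832; -55072; 16016; -36500; 8967; 65692; 1000000; 0; 0; 0; 0; 0; 0; 0; 0; 0; 0; 0; 0; 0; 0; 0; 0; 0; 0; 0; 0; 0; 0; 0; 0; 0; 0; 0; 0; 0; 0; 0; 0; 0];
  [:: 26596; 54176; 63483; 23640; 3508; -20132; 43100; 1000000; 0; 0; 0; 0; 0; 0; 0; 0; 0; 0; 0; 0; 0; 0; 0; 0; 0; 0; 0; 0; 0; 0; 0; 0; 0; 0; 0; 0; 0; 0; 0; 0];
  [:: 89415; 30762; 114393; 39668; -30849; 123769; -48708; -10974; 1000000; 0; 0; 0; 0; 0; 0; 0; 0; 0; 0; 0; 0; 0; 0; 0; 0; 0; 0; 0; 0; 0; 0; 0; 0; 0; 0; 0; 0; 0; 0; 0];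
  [:: -767230; 981; -426268; -120362; 466155; -43558; -560866; -313638; 506353; 1000000; 0; 0; 0; 0; 0; 0; 0; 0; 0; 0; 0; 0; 0; 0; 0; 0; 0; 0; 0; 0; 0; 0; 0; 0; 0; 0; 0; 0; 0; 0];
  [:: -298865; -34648; 82356; 92199; 54339; 235590; -22719; -99988; 161220; 131095; 1000000; 0; 0; 0; 0; 0; 0; 0; 0; 0; 0; 0; 0; 0; 0; 0; 0; 0; 0; 0; 0; 0; 0; 0; 0; 0; 0; 0; 0; 0];
  [:: 335663; -194005; 518970; -310985; -203420; -53663; 582136; -242916; 418883; -164614; 201051; 1000000; 0; 0; 0; 0; 0; 0; 0; 0; 0; 0; 0; 0; 0; 0; 0; 0; 0; 0; 0; 0; 0; 0; 0; 0; 0; 0; 0; 0];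
  [:: 140930; 325139; -279790; 6974; 267724; -647715; -654324; 781616; -54075; 136783; -262162; -178039; 1000000; 0; 0; 0; 0; 0; 0; 0; 0; 0; 0; 0; 0; 0; 0; 0; 0; 0; 0; 0; 0; 0; 0; 0; 0; 0; 0; 0];
  [:: -440073; 151761; -87971; 5793; 170200; -683952; -978550; 401610; 504859; 259224; -145623; -198863; 236921; 1000000; 0; 0; 0; 0; 0; 0; 0; 0; 0; 0; 0; 0; 0; 0; 0; 0; 0; 0; 0; 0; 0; 0; 0; 0; 0; 0];
  [:: -255994; 817109; 119092; 514186; 188106; -825180; -587698; 392228; -11637; -5334; -224721; -88958; 354460; 657700; 1000000; 0; 0; 0; 0; 0; 0; 0; 0; 0; 0; 0; 0; 0; 0; 0; 0; 0; 0; 0; 0; 0; 0; 0; 0; 0];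
  [:: 823514; -939437; -551290; 749212; 996172; 508651; -6280; 993726; -740518; -209912; -261482; 230617; 911120; -30922; 315826; 1000000; 0; 0; 0; 0; 0; 0; 0; 0; 0; 0; 0; 0; 0; 0; 0; 0; 0; 0; 0; 0; 0; 0; 0; 0];
  [:: 189652; -998843; -907636; 997982; 426055; -630687; -936132; 993834; -996434; -543817; -429885; -999925; 595086; 679001; 746006; 652488; 1000000; 0; 0; 0; 0; 0; 0; 0; 0; 0; 0; 0; 0; 0; 0; 0; 0; 0; 0; 0; 0; 0; 0; 0];
  [:: 417103; 991334; 895157; -178889; -615098; -984659; -777133; -797207; 982901; -624080; -588979; -499404; -344306; 367507; 172575; -618864; 213080; 1000000; 0; 0; 0; 0; 0; 0; 0; 0; 0; 0; 0; 0; 0; 0; 0; 0; 0; 0; 0; 0; 0; 0];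
  [:: -441351; -375248; -610081; 809067; -987905; -999102; 148418; -856460; -738826; -713338; -274201; -999998; -456515; 371548; 465161; -148556; 550409; 60013; 1000000; 0; 0; 0; 0; 0; 0; 0; 0; 0; 0; 0; 0; 0; 0; 0; 0; 0; 0; 0; 0; 0];
  [:: -253657; -585942; 289337; 987056; -339120; -999685; -176423; -210155; -969533; -729251; -845223; -999997; 381430; 742909; 851760; -80628; 772597; 194508; 334863; 1000000; 0; 0; 0; 0; 0; 0; 0; 0; 0; 0; 0; 0; 0; 0; 0; 0; 0; 0; 0; 0];
  [:: 999652; -392031; -168698; 272045; -892310; -996453; -987878; -391079; 885799; -999164; -1000000; -282661; 27742; 822876; 647275; 82073; 657566; 640179; 147580; -427200; 1000000; 0; 0; 0; 0; 0; 0; 0; 0; 0; 0; 0; 0; 0; 0; 0; 0; 0; 0; 0];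
  [:: 1000000; 590377; 624719; 320407; 982554; 884886; -855161; 997148; 983584; -293989; 496574; 837876; 809697; 111945; -121731; 754063; -404744; -175246; -638969; -496547; 305434; 1000000; 0; 0; 0; 0; 0; 0; 0; 0; 0; 0; 0; 0; 0; 0; 0; 0; 0; 0];
  [:: 548114; 806870; 934944; 997660; -999975; -582571; 956740; 999981; 789517; -434844; 1000000; -999998; 843616; -143627; 837874; -999817; 368522; -703367; 292451; 997746; -121203; -175746; 1000000; 0; 0; 0; 0; 0; 0; 0; 0; 0; 0; 0; 0; 0; 0; 0; 0; 0];
  [:: -382529; -985562; -999869; -999996; 999998; -482629; -130030; 999880; -999996; 934809; -802070; -999799; -999971; 117638; 8900; 301165; 393721; 372221; -704266; -683538; 207109; -847269; -709885; 1000000; 0; 0; 0; 0; 0; 0; 0; 0; 0; 0; 0; 0; 0; 0; 0; 0];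
  [:: -987711; 429252; -1000000; -859918; 683099; -995330; 999999; 999786; 676539; 220825; 1000000; 999249; 454006; 1000000; -627210; 621217; -193135; 274577; 428623; -999996; 27930; 440868; 14893; -832656; 1000000; 0; 0; 0; 0; 0; 0; 0; 0; 0; 0; 0; 0; 0; 0; 0];
  [:: 999999; -366090; 701658; 840429; 999997; -999999; 994937; 996841; 952800; -999976; 839522; -918562; 999700; 999789; -999971; 18781; 888522; 946979; 959475; 999914; -670411; -413681; 768408; -488553; 918153; 1000000; 0; 0; 0; 0; 0; 0; 0; 0; 0; 0; 0; 0; 0; 0];
  [:: -339961; 282377; 992321; -1000000; 985932; -991854; -449569; 990099; -944831; -999023; -999997; -955855; -865207; 765070; -912896; 593154; 373154; 869703; 305435; -182170; -479902; -743587; -996729; 760820; 150696; 347917; 1000000; 0; 0; 0; 0; 0; 0; 0; 0; 0; 0; 0; 0; 0];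
  [:: 864291; 726383; 991834; 889563; 940551; 1000000; -999954; -382950; -758539; -544126; 240614; 999261; 999997; -550475; 22714; 284158; -684585; -179201; 305370; 581603; -999787; 54818; 404045; -336336; -259649; 180501; -659038; 1000000; 0; 0; 0; 0; 0; 0; 0; 0; 0; 0; 0; 0];
  [:: 999987; -679933; 999998; 62421; 969531; 998928; -999999; 999962; -1000000; 987846; 999607; -831090; -999999; 501255; -641911; 760857; -567374; 874771; -999060; 238926; -946242; 998387; 458084; -994811; 999948; 549788; -998096; 731531; 1000000; 0; 0; 0; 0; 0; 0; 0; 0; 0; 0; 0];
  [:: -999994; 999989; 416419; -999979; -164075; 999950; -999768; 864507; 715527; -999999; 1000000; -148359; -999522; 653034; -999466; -999999; -364404; -993739; -871388; 999995; 999152; 999906; 34517; 321487; -977422; 291812; 266820; -148497; 160348; 1000000; 0; 0; 0; 0; 0; 0; 0; 0; 0; 0];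
  [:: 1000000; -999974; -999053; -993589; -996503; 867912; -1000000; -982111; 918546; 988440; 999983; -999163; -998330; 999964; 999908; -999640; -999999; 998196; -695731; 984496; 995419; -999930; 819079; 995540; -648056; 999643; 999998; 955892; 486609; 985274; 1000000; 0; 0; 0; 0; 0; 0; 0; 0; 0];
  [:: -294243; -999990; 999949; -992465; -884836; -998021; -708386; -999994; -999882; 936462; -629663; 101919; 966697; 999793; -998958; 686092; -175118; -997168; 811252; 999907; 999993; 850777; -999990; -941916; 999972; -496582; -446381; -943009; -169517; -746367; -678001; 1000000; 0; 0; 0; 0; 0; 0; 0; 0];
  [:: 847509; 963433; -999520; 760130; -231173; 851426; -989406; 68736; 884352; -999996; 999595; -999968; -975274; -999374; 831234; -332340; -337029; -596086; -999013; -259854; 684096; 740796; 948109; -41983; -668961; -14376; -366890; -211981; 458654; 439048; 77308; -530406; 1000000; 0; 0; 0; 0; 0; 0; 0];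
  [:: -998853; -999769; 999886; -567173; 895274; -477640; -976092; 739422; 981045; 1000000; 958516; -964308; -997730; -999970; -912443; -920236; 999986; 914387; 999572; -990097; 908164; 999995; -525904; 999422; -752901; 882482; -999674; 998992; -533520; 998551; 72546; -839212; 298621; 1000000; 0; 0; 0; 0; 0; 0];
  [:: -981425; 628817; -999860; 999995; -998786; 999161; -999995; 888334; -999997; -999917; 997602; 999251; 763468; 999991; -999950; -1000000; -999998; -999984; 187455; -999996; 999995; -999936; -999940; -674455; 999974; 999415; -999418; -910835; -999810; -999848; -693507; -996248; 999732; 947507; 1000000; 0; 0; 0; 0; 0];
  [:: 999991; 996307; -988865; 589699; 999999; -999982; 999981; -999998; 999477; -999995; 999990; -900464; 933202; -999890; -997447; 996933; 999761; -999986; -999459; 853937; 999979; -999911; -988583; 569970; -975463; -997353; -995390; 999736; 999788; -993403; -995019; -728939; -999988; 997869; 992661; 1000000; 0; 0; 0; 0];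
  [:: 986969; 999993; 999995; -999999; -1000000; 999981; -999999; -885712; -999995; 999954; 999069; -999582; 999914; -999981; 999989; 999981; 999786; -999409; 999989; -999911; 817312; -999999; -627446; -998258; 576260; 999958; -998484; -999841; -926289; 999990; -998253; 998628; 845082; -868798; -664542; -709034; 1000000; 0; 0; 0];
  [:: 998312; -999994; 992889; -1000000; 999988; -999997; -912761; 999997; 616420; -996984; 999954; 494961; -998652; -999978; 999633; -871105; 995084; -998272; 999889; -902248; -975330; 545225; -999723; -999982; -999929; 999621; -999902; -999982; 996756; -999981; 999533; -998834; -992566; 639061; 608528; 281599; 873732; 1000000; 0; 0];
  [:: -249493; -999949; -984561; 999998; -999988; 994685; 999991; 993224; 999973; -999685; -998780; 992757; 1000000; 666673; -999187; -1000000; 999931; -999995; -999999; -999935; -995323; -998094; -999971; -999797; -868692; 999474; 745655; -322774; 995313; 789023; 998541; 263813; 999962; 603800; -999899; 829709; -999905; 164107; 1000000; 0];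
  [:: 1000000; -999998; 999981; 996169; -649180; -999878; -999992; -999997; -999994; 999810; 999962; -999996; 999949; -998785; 999821; -999918; -999984; -999892; -999990; -997420; 999990; -991667; -999535; -999918; 999905; 999810; 999577; 999656; -999936; 999956; -999989; -999952; -934986; -999986; -999751; 999992; -999758; 999926; -999688; 1000000]].

Definition b_table : seq (seq Z) :=
[::
  [:: 989090; 826; -1835; -1810; -1969; 2168; 5123; 92568; 5522; 220031; -100585; 297058; -920695; -54715; -838633; -830308; 986126; -605793; 951726; 19240; 989039; 968723; -630097; 885880; -208707; -623165; 989005; -446300; -989089; 988737; 399479; -989089; 987249; 667698; 989074; -981217; -989088; -989089; 989088; -989012];
  [:: 0; 989887; 1853; -1288; 1996; -5007; 9314; 43142; -7713; 426703; -308098; 125728; -356534; 270873; -348022; -637919; 989887; -399710; 258509; -360467; 751008; 418464; -777317; -494253; -685393; 989887; 926096; 206152; 989885; -801123; 989887; -676139; -126346; -124885; -989887; 988799; -698332; 989887; -989878; 989521];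
  [:: 0; 0; 989978; 3740; -22; -3040; 17639; -84060; -15818; -108620; 45562; -80933; -10754; 314433; 421720; 170344; -384237; -227156; -379249; -396188; 630508; -731877; 951875; 69391; -989939; -989978; -989943; -984895; 680788; -946039; 890942; -989977; -655688; 879271; 974309; 989964; -989978; -989927; 989971; -989969];
  [:: 0; 0; 0; 990836; 488; -712; -5129; -74795; -8947; 160674; -311023; 193881; -505978; 246935; -474079; 769163; 971666; -967970; 899284; -457839; 983380; -821176; -779053; -887884; -942285; 796559; 965608; -983006; 33292; 990798; 990586; 977855; -990831; -984373; 990836; -990755; 990835; 990002; -990793; -990807];
  [:: 0; 0; 0; 0; 990196; 1123; -16895; -103895; -2163; -227349; -323554; -224206; 657634; 370858; 956519; -990196; 901070; -721380; 755195; -890710; 990196; 942062; 990195; -990091; -103853; -898852; 989804; -953463; 985814; -29914; 755193; 990187; 138993; 956806; 746823; -989529; -990188; -990196; 762358; 990157];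
  [:: 0; 0; 0; 0; 0; 990478; 10377; -3354; 17; -338048; -46741; -599128; 587861; -37136; 701217; -179239; 38996; 182346; 352021; -481686; 303125; 702475; -990221; -769878; 990461; -988784; 978035; 990339; 990384; -395384; -380275; -972888; -989139; -990450; -990433; 990478; 990472; 990477; -990475; 407894];
  [:: 0; 0; 0; 0; 0; 0; 999437; -52570; -23112; -44571; 423287; -410404; -288833; -22020; 435655; -427161; -298330; -320181; 189938; -520172; 969830; 918937; -999437; -564679; -998955; 614940; -965575; -566585; -998981; -969502; -758491; 999433; 999322; -999312; 999335; -999204; -998393; 999437; -999426; 999423];
  [:: 0; 0; 0; 0; 0; 0; 0; 1003523; -3888; 535295; -250129; 122125; -218155; -601189; -519667; 84991; -924764; 52074; 87975; 773972; 345009; -998791; -947845; -959907; -780247; -988872; 1001606; 1003441; -1002274; 831471; -611356; 1003517; 312250; -1003508; -998702; 987824; 1003503; -1003516; -985856; 1003520];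
  [:: 0; 0; 0; 0; 0; 0; 0; 0; 1000034; 142502; -292951; 24470; 252815; -43191; 150578; 806346; -915772; -372036; 832034; -815301; -856490; -999866; -892531; -999473; 1000020; 898269; -999145; 1000001; -1000034; 999934; 243919; 213491; 644604; -996099; 960403; -1000034; -1000020; 999069; -999893; 1000031];
  [:: 0; 0; 0; 0; 0; 0; 0; 0; 0; 1295121; -425104; 275599; -425087; 32519; -500981; -14283; 1283419; -1295119; 823942; -51407; 1076974; -353662; -334668; -67562; -1241342; 136034; 1295098; -1152556; -268591; -1295082; -1295120; -1295112; 1295046; -1083468; 1189167; 1295119; -1279996; 168709; 1295118; -1295120];
  [:: 0; 0; 0; 0; 0; 0; 0; 0; 0; 0; 1096913; -106851; 67739; 330502; 507204; 603691; 319970; 617562; -1096906; 778135; -561133; -515735; -280223; 1096895; 743309; -1096751; 1096911; -1025081; -906109; 1096827; 1078526; 1096913; 1096904; -414963; -1096912; -1091559; -1096738; -1096909; 1081483; -1096898];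
  [:: 0; 0; 0; 0; 0; 0; 0; 0; 0; 0; 0; 1190787; -547628; 243555; -58814; 179831; 1081911; 65173; -694987; 1190787; 1172730; -1190633; 1190631; -121705; 797626; 1179658; 1179903; 934981; 1173236; 1190787; -1190764; -681741; -150396; -1190644; -1190265; 1187054; 1140498; 1190614; -1190786; 1190628];
  [:: 0; 0; 0; 0; 0; 0; 0; 0; 0; 0; 0; 0; 1412704; -318489; 705086; -581704; -855420; 1376940; -893022; 357201; -1034355; 1412688; -137097; 1411100; 872343; -770572; -1314836; -1408245; 1412653; 31664; -1327749; -1411989; -1412689; -1412535; 1412703; -1412694; -1401889; 1411894; -1412688; -1412703];
  [:: 0; 0; 0; 0; 0; 0; 0; 0; 0; 0; 0; 0; 0; 1265454; 656289; -425122; 1265446; -994209; 390416; -1265357; 936172; 1139758; 232892; 1265453; -1145545; -1257388; -753465; -1246767; -1234447; -813439; -1264616; -1074122; 1155191; -1185813; -1265207; -1265451; 1265454; 1264893; -1264761; 1250241];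
  [:: 0; 0; 0; 0; 0; 0; 0; 0; 0; 0; 0; 0; 0; 0; 1536932; 44189; -336822; 93253; -346210; -158487; 265060; -299187; -1518383; -1365270; 1518193; 789467; -901964; 1293492; 387256; 1163057; -1536928; 1495263; 1535885; 1536932; -533568; 1536815; -1536836; -1536377; 769952; -1536731];
  [:: 0; 0; 0; 0; 0; 0; 0; 0; 0; 0; 0; 0; 0; 0; 0; 2390341; -1463163; 194504; -252358; -34886; -924100; -2099353; -97807; -198306; -1749310; 2388907; -1724809; 67202; -2137166; -2382485; 1535232; -2390213; 434079; 2052519; -2389878; 2390329; -2390259; 2390291; 2349018; 2390149];
  [:: 0; 0; 0; 0; 0; 0; 0; 0; 0; 0; 0; 0; 0; 0; 0; 0; 2612812; -112377; -1361875; 946775; 1516794; 641022; 2050273; 395726; 2595955; 586574; 2611888; 2407571; 1780708; -2612758; 1587066; -1195276; 1302898; -2242804; 2612791; 2597227; -2612809; 2598631; -2612746; 2612755];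
  [:: 0; 0; 0; 0; 0; 0; 0; 0; 0; 0; 0; 0; 0; 0; 0; 0; 0; 2113169; -1666046; 1052635; -467722; 410654; -2113164; -2083405; -871388; -1959051; 1762702; -2110844; -2111455; 537481; -2113167; 2066600; 504128; -1200532; -2108403; 2113087; 2047027; 2111329; 2113167; 2113121];
  [:: 0; 0; 0; 0; 0; 0; 0; 0; 0; 0; 0; 0; 0; 0; 0; 0; 0; 0; 2319804; -723681; 174886; -230544; -1263833; -448870; -1470999; -1447000; 1698275; 535070; 2310846; 2307924; -2319665; -2291346; -1851257; -2286067; -2319804; 2319802; -2319667; -2019068; 1944288; 2319222];
  [:: 0; 0; 0; 0; 0; 0; 0; 0; 0; 0; 0; 0; 0; 0; 0; 0; 0; 0; 0; 1901444; 269131; -1180690; -1879241; -1900436; 1421507; 1901396; 1340969; 1795850; -1845534; 1900249; 1901440; -1900579; 1898023; -1518054; -1863853; -1871663; 1745867; -1095204; 1900222; 1901426];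
  [:: 0; 0; 0; 0; 0; 0; 0; 0; 0; 0; 0; 0; 0; 0; 0; 0; 0; 0; 0; 0; 2571655; 164659; 928274; -2367571; -2570585; -1104561; 1726618; -533010; 2571650; -2564727; 2571483; 1135324; -1875055; -1970038; -2571524; -2571207; -683741; -2367750; 2571124; -2571476];
  [:: 0; 0; 0; 0; 0; 0; 0; 0; 0; 0; 0; 0; 0; 0; 0; 0; 0; 0; 0; 0; 0; 2682828; -1923086; 1274887; 1655704; 2682807; -834448; 639224; 404085; -1174182; -2655988; 2229329; 2682433; -2682706; 2393821; 2681858; 2633178; -2680428; 2680540; 2682752];
  [:: 0; 0; 0; 0; 0; 0; 0; 0; 0; 0; 0; 0; 0; 0; 0; 0; 0; 0; 0; 0; 0; 0; 6000389; 1616306; -2051339; -1294433; -858982; -1479014; 1912735; -5715564; -3322187; 360482; -1485536; 6000290; -5863428; 5995003; 5999666; 6000274; 6000309; 6000355];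
  [:: 0; 0; 0; 0; 0; 0; 0; 0; 0; 0; 0; 0; 0; 0; 0; 0; 0; 0; 0; 0; 0; 0; 0; 4402874; 4320506; 4382002; -3464333; 831619; 4401892; 3852154; -2239004; -2662777; -3807164; -3858742; -4399593; 3645135; 4398954; 4396671; 4401594; 4402782];
  [:: 0; 0; 0; 0; 0; 0; 0; 0; 0; 0; 0; 0; 0; 0; 0; 0; 0; 0; 0; 0; 0; 0; 0; 0; 6744824; 3263118; -332292; 5212254; 6714622; 6450054; 6425907; -6563229; -6712278; 3418347; 1523613; 1976504; 6744805; 460189; 6738955; -6744721];
  [:: 0; 0; 0; 0; 0; 0; 0; 0; 0; 0; 0; 0; 0; 0; 0; 0; 0; 0; 0; 0; 0; 0; 0; 0; 0; 7670412; -3135927; 333693; 1083933; -6900360; -7649607; 7667460; 3752704; -3445424; -2137047; 2965050; -4991124; -7666654; -7587794; -7670275];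
  [:: 0; 0; 0; 0; 0; 0; 0; 0; 0; 0; 0; 0; 0; 0; 0; 0; 0; 0; 0; 0; 0; 0; 0; 0; 0; 0; 4140560; 286377; 1907014; -4139989; -3853766; 1995398; 4140465; 3259871; 4108768; -4140552; 4136306; 4046094; 4138456; -4126847];
  [:: 0; 0; 0; 0; 0; 0; 0; 0; 0; 0; 0; 0; 0; 0; 0; 0; 0; 0; 0; 0; 0; 0; 0; 0; 0; 0; 0; 4771515; 852288; -2892277; 1602798; 4766477; 4756370; -4735105; 4770143; -4769061; 2990550; 4759172; 4771393; -4753475];
  [:: 0; 0; 0; 0; 0; 0; 0; 0; 0; 0; 0; 0; 0; 0; 0; 0; 0; 0; 0; 0; 0; 0; 0; 0; 0; 0; 0; 0; 10186000; 4536785; -8441340; -3253064; -7254656; -5141619; -2793453; -10183299; -10185961; 10020415; -10176943; 10185035];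
  [:: 0; 0; 0; 0; 0; 0; 0; 0; 0; 0; 0; 0; 0; 0; 0; 0; 0; 0; 0; 0; 0; 0; 0; 0; 0; 0; 0; 0; 0; 9926956; 2697504; -9895541; -8295791; 9096188; 9926834; 9767670; -5578576; 9804098; 9922576; -9923350];
  [:: 0; 0; 0; 0; 0; 0; 0; 0; 0; 0; 0; 0; 0; 0; 0; 0; 0; 0; 0; 0; 0; 0; 0; 0; 0; 0; 0; 0; 0; 0; 20501424; -6584591; -4148146; -1053865; 6367595; 6704346; -837362; -20183480; -20496629; 20500631];
  [:: 0; 0; 0; 0; 0; 0; 0; 0; 0; 0; 0; 0; 0; 0; 0; 0; 0; 0; 0; 0; 0; 0; 0; 0; 0; 0; 0; 0; 0; 0; 0; 15141751; 2098737; 5365789; 5620491; 15141380; 1228911; 15141421; -14197831; 15111219];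
  [:: 0; 0; 0; 0; 0; 0; 0; 0; 0; 0; 0; 0; 0; 0; 0; 0; 0; 0; 0; 0; 0; 0; 0; 0; 0; 0; 0; 0; 0; 0; 0; 0; 6761149; -6740909; 6676636; 6747502; 6760861; 6710867; -6760303; -292384];
  [:: 0; 0; 0; 0; 0; 0; 0; 0; 0; 0; 0; 0; 0; 0; 0; 0; 0; 0; 0; 0; 0; 0; 0; 0; 0; 0; 0; 0; 0; 0; 0; 0; 0; 24512228; -11320043; -15094831; 12542728; 24257376; -24498711; 24507230];
  [:: 0; 0; 0; 0; 0; 0; 0; 0; 0; 0; 0; 0; 0; 0; 0; 0; 0; 0; 0; 0; 0; 0; 0; 0; 0; 0; 0; 0; 0; 0; 0; 0; 0; 0; 33353082; 33255054; -28576983; 16342285; 32854701; 33352831];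
  [:: 0; 0; 0; 0; 0; 0; 0; 0; 0; 0; 0; 0; 0; 0; 0; 0; 0; 0; 0; 0; 0; 0; 0; 0; 0; 0; 0; 0; 0; 0; 0; 0; 0; 0; 0; 54627115; 47992987; -54621788; -21244385; -54615699];
  [:: 0; 0; 0; 0; 0; 0; 0; 0; 0; 0; 0; 0; 0; 0; 0; 0; 0; 0; 0; 0; 0; 0; 0; 0; 0; 0; 0; 0; 0; 0; 0; 0; 0; 0; 0; 0; 54259687; -22983578; -17051103; 54252363];
  [:: 0; 0; 0; 0; 0; 0; 0; 0; 0; 0; 0; 0; 0; 0; 0; 0; 0; 0; 0; 0; 0; 0; 0; 0; 0; 0; 0; 0; 0; 0; 0; 0; 0; 0; 0; 0; 0; 94006096; 70732339; -93991960];
  [:: 0; 0; 0; 0; 0; 0; 0; 0; 0; 0; 0; 0; 0; 0; 0; 0; 0; 0; 0; 0; 0; 0; 0; 0; 0; 0; 0; 0; 0; 0; 0; 0; 0; 0; 0; 0; 0; 0; 121850225; 121849607];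
  [:: 0; 0; 0; 0; 0; 0; 0; 0; 0; 0; 0; 0; 0; 0; 0; 0; 0; 0; 0; 0; 0; 0; 0; 0; 0; 0; 0; 0; 0; 0; 0; 0; 0; 0; 0; 0; 0; 0; 0; 504980137]].

Definition entry (t : seq (seq Z)) (i j : nat) : Z := nth 0 (nth [::] t i) j.
Definition a := entry a_table.
Definition b := entry b_table.
Definition scale : Z := 1000000.
Definition bound : Z := 473.

(* Integer sum f 0 + ... + f (k - 1), computable by vm_compute. *)
Definition zsum (f : nat -> Z) (k : nat) : Z :=
  foldr (fun l acc => f l + acc) 0 (iota 0 k).

Definition entry_ok (i j : nat) : bool :=
  [&& (if (i < j)%N then Z.eqb (a i j) 0 else true),
      (if (j < i)%N then Z.eqb (b i j) 0 else true),
      Z.leb (Z.abs (a i j)) scale,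
      Z.leb (Z.abs (b i j)) (Z.abs (b i i)) &
      Z.leb (Z.abs (zsum (fun l => a i l * b l j) 40)) (scale * scale)].

Definition diag_ok (i : nat) : bool := Z.eqb (a i i) scale && negb (Z.eqb (b i i) 0).

Definition tables_ok : bool :=
  [&& all (fun i => all (entry_ok i) (iota 0 40)) (iota 0 40),
      all diag_ok (iota 0 40) & Z.leb (bound * scale) (Z.abs (b 39 39))].

Lemma tables_okP : tables_ok = true.
Proof. vm_compute. reflexivity. Qed.

Lemma entry_okP i j : (i < 40)%N -> (j < 40)%N -> entry_ok i j.
Proof.
move=> i40 j40.
have i_in : i \in iota 0 40 by rewrite mem_iota.
have j_in : j \in iota 0 40 by rewrite mem_iota.
have /and3P [ok _ _] := tables_okP.
exact: (allP (allP ok i i_in) j j_in).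
Qed.

Lemma diag_okP i : (i < 40)%N -> diag_ok i.
Proof.
by move=> i40; have /and3P [_ ok _] := tables_okP; apply: (allP ok); rewrite mem_iota.
Qed.

Lemma last_pivot_ok : Z.leb (bound * scale) (Z.abs (b 39 39)).
Proof. by have /and3P [_ _ ok] := tables_okP. Qed.

(* 40^1.669 <= 473, in integer form. *)
Lemma exponent_ok : Z.leb (40 ^+ 1669) (bound ^+ 1000).
Proof. vm_compute. reflexivity. Qed.

End Certificate40.

Section BaseCertificate.
Variable R : realType.
Import Certificate40.

Definition zr (z : Z) : R := (int_of_Z z)%:~R.

Lemma zrM x y : zr (Z.mul x y) = zr x * zr y.
Proof. by rewrite /zr -intrM -rmorphM. Qed.

Lemma zrD x y : zr (Z.add x y) = zr x + zr y.
Proof. by rewrite /zr -intrD -rmorphD. Qed.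

Lemma zrX x k : zr (x ^+ k) = zr x ^+ k.
Proof. by rewrite /zr !rmorphXn. Qed.

Lemma zr_le x y : Z.leb x y -> zr x <= zr y.
Proof.
move=> /Z.leb_le xy; rewrite /zr ler_int.
by have := int_of_ZK x; have := int_of_ZK y; lia.
Qed.

Lemma normr_zr x : `|zr x| = zr (Z.abs x).
Proof.
rewrite /zr -intr_norm; congr intmul.
by have := int_of_ZK x; have := int_of_ZK (Z.abs x); lia.
Qed.

Lemma zr_eq0 x : zr x = 0 -> x = Z0.
Proof. by move/eqP; rewrite /zr intr_eq0 => /eqP x0; rewrite -(int_of_ZK x) x0. Qed.

Lemma zr_zsum f k : zr (zsum f k) = \sum_(l < k) zr (f l).
Proof.
rewrite -(big_mkord xpredT (fun l => zr (f l))) /index_iota subn0 /zsum.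
by elim: (iota 0 k) => [|x s IH]; rewrite ?big_nil ?big_cons //= zrD IH.
Qed.

Lemma normr_zr_div x (d : R) : 0 < d -> `|zr x / d| = zr (Z.abs x) / d.
Proof. by move=> d0; rewrite normrM normfV (gtr0_norm d0) normr_zr. Qed.

Lemma zr_scale_gt0 : 0 < zr scale.
Proof. by rewrite /zr ltr0z. Qed.

Lemma zr_bound : zr bound = 473%:R.
Proof. by []. Qed.

Definition base_L (i j : nat) : R := zr (a i j) / zr scale.
Definition base_U (i j : nat) : R := zr (b i j) / zr scale.

Lemma certificate_base : growth_certificate 40 base_L base_U 473%:R.
Proof.
(* Positivity side conditions are passed explicitly: closing them by
   computation would unfold the integers in unary. *)
have s0 := zr_scale_gt0; have ss0 : 0 < zr scale * zr scale := mulr_gt0 s0 s0.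
have s_neq0 : zr scale != 0 by rewrite (gt_eqF s0).
have s0inv : 0 < (zr scale)^-1 by rewrite invr_gt0 s0.
split; [by [] | exact: ler0n | | | | | | | |].
- rewrite [(40.-1)%N]/= /base_U (normr_zr_div _ s0) (ler_pdivlMr _ _ s0).
  rewrite -zr_bound -zrM; exact: zr_le last_pivot_ok.
- move=> i j i40 j40 ij; case/and5P: (entry_okP i40 j40); rewrite ij.
  by move=> /Z.eqb_eq aij _ _ _ _; rewrite /base_L aij mul0r.
- move=> i i40; case/andP: (diag_okP i40) => /Z.eqb_eq aii _.
  by rewrite /base_L aii (divff s_neq0).
- move=> i j i40 j40 ji; case/and5P: (entry_okP i40 j40); rewrite ji.
  by move=> _ /Z.eqb_eq bij _ _ _; rewrite /base_U bij mul0r.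
- move=> i i40; case/andP: (diag_okP i40) => _ bii.
  rewrite /base_U mulf_neq0 ?invr_eq0 //.
  by apply/eqP => /zr_eq0 bii0; rewrite bii0 in bii.
- move=> i j i40 j40; case/and5P: (entry_okP i40 j40) => _ _ aij _ _.
  rewrite /base_L (normr_zr_div _ s0) (ler_pdivrMr _ _ s0) mul1r; exact: zr_le.
- move=> i j i40 j40; case/and5P: (entry_okP i40 j40) => _ _ _ bij _.
  rewrite /base_U !(normr_zr_div _ s0) (ler_pM2r s0inv); exact: zr_le.
- move=> i j i40 j40; case/and5P: (entry_okP i40 j40) => _ _ _ _ abij.
  rewrite /lu_entry /base_L /base_U.
  under eq_bigr => l _ do rewrite mulrACA -zrM.
  rewrite -big_distrl /= -(zr_zsum (fun l => Z.mul (a i l) (b l j))) -invfM.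
  rewrite (normr_zr_div _ ss0) (ler_pdivrMr _ _ ss0) mul1r -zrM; exact: zr_le.
Qed.

Lemma rpow40_le : (40%:R : R) `^ (1669%:R / 1000%:R) <= 473%:R.
Proof.
rewrite -(@ler_pXn2r _ 1000) ?nnegrE ?ler0n ?powR_ge0 //.
rewrite -powR_mulrn ?ler0n // -powRrM mulfVK ?pnatr_eq0 // powR_mulrn ?ler0n //.
by rewrite -zr_bound -[40%:R]/(zr 40) -!zrX zr_le ?exponent_ok.
Qed.

End BaseCertificate.

Lemma rpow_lt_pow473 (R : realType) (n k : nat) : (0 < n)%N -> (n < 40 ^ k.+1)%N ->
  (n%:R : R) `^ (1669%:R / 1000%:R) / 641%:R < 473%:R ^+ k.
Proof.
move=> n0 nk; set e : R := 1669%:R / 1000%:R.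
have e0 : 0 < e by rewrite divr_gt0 ?ltr0n.
rewrite ltr_pdivrMr ?ltr0n //.
apply: (@lt_le_trans _ _ ((40%:R ^+ k.+1) `^ e)).
  apply: gt0_ltr_powR => //; rewrite ?nnegrE ?ler0n ?exprn_ge0 //.
  by rewrite -natrX ltr_nat.
rewrite -powR_mulrn ?ler0n // powRAC powR_mulrn ?powR_ge0 //.
apply: (@le_trans _ _ (473%:R ^+ k.+1)).
  by rewrite lerXn2r ?nnegrE ?powR_ge0 ?ler0n ?rpow40_le.
by rewrite exprS mulrC ler_pM2l ?exprn_gt0 ?ltr0n // ler_nat.
Qed.

Theorem theorem1p2 (R : realType) (n : nat) (hn : (1 <= n)%N) :
  (((n%:R `^ (1669%:R / 1000%:R)) / 641%:R)%:E < growth_RP R n)%E.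
Proof.
set k := trunc_log 40 n.
have kn : (40 ^ k <= n)%N by apply: trunc_logP.
have nk : (n < 40 ^ k.+1)%N by apply: trunc_log_ltn.
have := certificate_pad (n - 40 ^ k) (certificate_pow k (certificate_base R)).
rewrite subnK // => /certificate_growth [rook growth].
apply: lt_le_trans (ereal_sup_ubound _); last by eexists; first exact: rook.
by rewrite lte_fin (lt_le_trans (rpow_lt_pow473 R hn nk)).
Qed.
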